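(* Let $S$ be a set and let $P$ be a set of $S$-probabilities such that $0,1\in P$ and $1-p\in P$ for every $p\in P$. Then all elements of $P$ are varying if and only if $P$ is complemented, i.e. $p\wedge p'=0$ for all $p\in P$.
   Context: An $S$-probability is a function $p\colon S\to[0,1]$; sets of $S$-probabilities are ordered pointwise, $0,1$ are the constant functions and $p':=1-p$. For $p,q\in P$, $p\wedge q=0$ means that the only $x\in P$ with $x\le p$ and $x\le q$ is $x=0$. An $S$-probability $p$ is varying if whenever $p\le 1/2$ pointwise or $p\ge 1/2$ pointwise, then $p=0$ or $p=1$. *)

From Stdlib Require Import Reals.
Open Scope R_scope.

Definition is_Sprob {S : Type} (p : S -> R) : Prop :=
  forall s, 0 <= p s <= 1.

Definition ple {S : Type} (p q : S -> R) : Prop := forall s, p s <= q s.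

Definition pzero {S : Type} : S -> R := fun _ => 0.
Definition pone {S : Type} : S -> R := fun _ => 1.
Definition pcompl {S : Type} (p : S -> R) : S -> R := fun s => 1 - p s.

Definition meet_zero {S : Type} (P : (S -> R) -> Prop) (p q : S -> R) : Prop :=
  forall x, P x -> ple x p -> ple x q -> x = pzero.

Definition varying {S : Type} (p : S -> R) : Prop :=
  ((forall s, p s <= 1/2) \/ (forall s, 1/2 <= p s)) -> p = pzero \/ p = pone.

Definition complemented {S : Type} (P : (S -> R) -> Prop) : Prop :=
  forall p, P p -> meet_zero P p (pcompl p).

From Stdlib Require Import Reals Lra FunctionalExtensionality.
Open Scope R_scope.

(* Everything happens below 1/2: a common lower bound of p and 1 - p is at most
   1/2, and p <= 1/2 makes p itself a common lower bound of p and 1 - p.  So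
   each property forces an element of P that is <= 1/2 to be 0; the case
   p >= 1/2 is reduced to this one by passing to 1 - p. *)

Section SProbabilities.

Context {S : Type}.
Implicit Types p x : S -> R.

Lemma pcompl_eq_pzero {p} : pcompl p = pzero -> p = pone.
Proof.
  intros E; apply functional_extensionality; intros s.
  generalize (equal_f E s); unfold pcompl, pzero, pone; lra.
Qed.

Lemma le_half_ple_pcompl {p} : (forall s, p s <= 1/2) -> ple p (pcompl p).
Proof. intros Hp s; unfold pcompl; specialize (Hp s); lra. Qed.

Lemma ple_pcompl_le_half {x p} :
  ple x p -> ple x (pcompl p) -> forall s, x s <= 1/2.
Proof. intros Hxp Hxq s; specialize (Hxp s); specialize (Hxq s); unfold pcompl in *; lra. Qed.

Lemma varying_le_half {x} : varying x -> (forall s, x s <= 1/2) -> x = pzero.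
Proof.
  intros Hv Hx; destruct (Hv (or_introl Hx)) as [E | E]; [exact E |].
  apply functional_extensionality; intros s.
  specialize (Hx s); rewrite E in Hx; unfold pone in Hx; lra.
Qed.

Lemma complemented_le_half {P : (S -> R) -> Prop} {p} :
  complemented P -> P p -> (forall s, p s <= 1/2) -> p = pzero.
Proof.
  intros HP Pp Hp; apply (HP p Pp p Pp).
  - intros s; lra.
  - exact (le_half_ple_pcompl Hp).
Qed.

End SProbabilities.

Theorem mainTheorem2 (S : Type) (P : (S -> R) -> Prop)
  (HP : forall p, P p -> is_Sprob p)
  (H0 : P pzero) (H1 : P pone)
  (Hc : forall p, P p -> P (pcompl p)) :
  (forall p, P p -> varying p) <-> complemented P.
Proof.
  split.
  - intros Hv p _ x Px Hxp Hxq.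
    exact (varying_le_half (Hv x Px) (ple_pcompl_le_half Hxp Hxq)).
  - intros Hcm p Pp [Hle | Hge].
    + left; exact (complemented_le_half Hcm Pp Hle).
    + right; apply pcompl_eq_pzero, (complemented_le_half Hcm (Hc p Pp)).
      intros s; specialize (Hge s); unfold pcompl; lra.
Qed.
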